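(* Let $q$ be a probability measure on $(0,\infty)$ (absolutely continuous part plus finitely many atoms, finite mean), $r^\star>0$, $\mathcal C_1=(0,r^\star]$, $\mathcal C_2=(r^\star,\infty)$, $p^i=q(\mathcal C_i)>0$, and $q^i(I)=q(I\cap\mathcal C_i)/p^i$ for $i=1,2$. Let $d>0$, write $\hat\nu(d)=\int e^{-dr}\nu(dr)$, and define $$\pi^i=p^i\frac{1-\hat q^i(d)}{1-\hat q(d)},\qquad \mu^{\rm in}=\frac{d}{1-\hat q(d)},\qquad \mu^{{\rm in},i}=\frac{d}{1-\hat q^i(d)}\quad(i=1,2).$$ Then $\pi^1\le p^1$, $\pi^2\ge p^2$, and $\mu^{{\rm in},2}\le\mu^{\rm in}\le\mu^{{\rm in},1}$. *)

From HB Require Import structures.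
From mathcomp Require Import all_boot all_order all_algebra.
From mathcomp Require Import all_classical all_reals all_analysis.
Set Implicit Arguments. Unset Strict Implicit. Unset Printing Implicit Defensive.
Import Order.TTheory GRing.Theory Num.Theory.
Local Open Scope classical_set_scope.
Local Open Scope ring_scope.

Definition C1 {R : realType} (rs : R) : set R := [set x | 0 < x <= rs].
Definition C2 {R : realType} (rs : R) : set R := [set x | rs < x].

Definition laplace_on {R : realType} (nu : {measure set R -> \bar R})
  (D : set R) (d : R) : R := Rintegral nu D (fun r => expR (- (d * r))).

Definition qhat {R : realType} (q : probability R R) (d : R) : R :=
  laplace_on q setT d.

Definition pcl {R : realType} (q : probability R R) (C : set R) : R := fine (q C).

(* Laplace transform of q^i = q(. /\ C_i)/p^i :
   hat q^i(d) = (1/p^i) \int_{C_i} e^{-dr} q(dr) *)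
Definition qhat_cl {R : realType} (q : probability R R) (C : set R) (d : R) : R :=
  laplace_on q C d / pcl q C.

Definition ac_plus_atoms {R : realType} (q : probability R R) : Prop :=
  exists (f : R -> R) (s : seq (R * R)),
    measurable_fun setT f /\ (forall x, 0 <= f x) /\ all (fun a => 0 <= a.2) s /\
    forall A : set R, measurable A ->
      q A = (\int[lebesgue_measure]_(x in A) (f x)%:E +
             \sum_(a <- s) (a.2)%:E * \d_(a.1) A)%E.

(* Since r |-> exp(-d r) decreases, it is at least c := exp(-d rs) on C_1 and
   at most c on C_2, so the class transforms satisfy q^2(d) <= c <= q^1(d); and
   q^1(d) < 1 because exp(-d r) < 1 on C_1, which has positive mass.  As q lives
   on (0, oo), q(d) = p^1 q^1(d) + p^2 q^2(d) is a convex combination, hence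
   q^2(d) <= q(d) <= q^1(d) < 1, and the four inequalities are rearrangements
   of this. *)

From HB Require Import structures.
From mathcomp Require Import all_boot all_order all_algebra.
From mathcomp Require Import all_classical all_reals all_analysis.
From mathcomp Require Import measurable_realfun ring lra.
Import Order.TTheory GRing.Theory Num.Theory.
Local Open Scope classical_set_scope.
Local Open Scope ring_scope.

Lemma Rintegral_gt0 d (T : measurableType d) (R : realType)
    (mu : {measure set T -> \bar R}) (D : set T) (f : T -> R) :
  measurable D -> mu.-integrable D (EFin \o f) ->
  (forall x, D x -> 0 < f x) -> (0 < mu D)%E ->
  0 < \int[mu]_(x in D) f x.
Proof.
move=> mD intf f_gt0 muD_gt0.
have f_ge0 x : D x -> (0 <= (EFin \o f) x)%E by move/f_gt0/ltW.
rewrite fine_gt0// -ge0_fin_numE ?integral_ge0// integrable_fin_num// andbT.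
rewrite lt0e integral_ge0// andbT; apply/eqP => intf0.
have [|N [mN muN0 DN]] := (ae_eq_integral_abs mu mD (measurable_int _ intf)).1.
  by rewrite -intf0; apply: eq_integral => x /[!inE] /f_ge0/gee0_abs.
suff : mu D = 0 by move=> muD0; rewrite muD0 ltxx in muD_gt0.
apply/eqP; rewrite eq_le measure_ge0 andbT -muN0 le_measure ?inE//.
by move=> x Dx; apply: DN => /(_ Dx) [] /eqP; rewrite gt_eqF ?f_gt0.
Qed.

Lemma mixture_ratio_bounds {R : realFieldType} (p1 p2 h1 h2 d : R) :
  0 < p1 -> 0 < p2 -> p1 + p2 = 1 -> h2 <= h1 -> h1 < 1 -> 0 < d ->
  let h := p1 * h1 + p2 * h2 in
  [/\ p1 * (1 - h1) / (1 - h) <= p1, p2 <= p2 * (1 - h2) / (1 - h)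
    & d / (1 - h2) <= d / (1 - h) <= d / (1 - h1)].
Proof.
move=> p1_gt0 p2_gt0 p_sum h2_le_h1 h1_lt1 d_gt0 h.
have h2_le_h : h2 <= h by rewrite /h; nra.
have h_le_h1 : h <= h1 by rewrite /h; nra.
have [h_lt1 h2_lt1] : h < 1 /\ h2 < 1 by split; lra.
split.
- by rewrite ler_pdivrMr ?subr_gt0// ler_pM2l// lerD2l lerN2.
- by rewrite ler_pdivlMr ?subr_gt0// ler_pM2l// lerD2l lerN2.
- by rewrite !ler_pM2l// !lef_pV2 ?posrE ?subr_gt0// !lerD2l !lerN2 h2_le_h.
Qed.

Section laplace_on_finite_measure.
Context {R : realType} (mu : {finite_measure set R -> \bar R}) (d : R).
Hypothesis d_ge0 : 0 <= d.

Lemma measurable_expRNM (D : set R) :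
  measurable_fun D (fun r => expR (- (d * r))).
Proof.
apply: measurableT_comp; first exact: measurable_expR.
by apply: measurableT_comp.
Qed.

Lemma integrable_expRNM (D : set R) : measurable D ->
  D `<=` [set r | 0 <= r] -> mu.-integrable D (EFin \o fun r => expR (- (d * r))).
Proof.
move=> mD Dge0; apply: measurable_bounded_integrable => //.
  by rewrite -ge0_fin_numE ?fin_num_measure.
exact: measurable_expRNM.
exists 1; split=> // M M1 r /Dge0 r_ge0.
rewrite /= ger0_norm ?expR_ge0// (le_trans _ (ltW M1))//.
by rewrite expR_le1 oppr_le0 mulr_ge0.
Qed.

Lemma laplace_on_setU (A B : set R) : measurable A -> measurable B ->
  A `|` B `<=` [set r | 0 <= r] -> [disjoint A & B] ->
  laplace_on mu (A `|` B) d = laplace_on mu A d + laplace_on mu B d.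
Proof.
move=> mA mB ABge0 AB; apply: Rintegral_setU => //.
by apply: integrable_expRNM => //; exact: measurableU.
Qed.

Lemma laplace_on_le (D : set R) (c : R) : measurable D ->
  D `<=` [set r | 0 <= r] -> (forall r, D r -> expR (- (d * r)) <= c) ->
  laplace_on mu D d <= c * fine (mu D).
Proof.
move=> mD Dge0 le_c; rewrite -Rintegral_cst//.
apply: le_Rintegral => //; first exact: integrable_expRNM.
exact: finite_measure_integrable_cst.
Qed.

Lemma laplace_on_ge (D : set R) (c : R) : measurable D ->
  D `<=` [set r | 0 <= r] -> (forall r, D r -> c <= expR (- (d * r))) ->
  c * fine (mu D) <= laplace_on mu D d.
Proof.
move=> mD Dge0 ge_c; rewrite -Rintegral_cst//.
apply: le_Rintegral => //; last exact: integrable_expRNM.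
exact: finite_measure_integrable_cst.
Qed.

End laplace_on_finite_measure.

Lemma laplace_on_lt_measure {R : realType} (mu : {finite_measure set R -> \bar R})
    (D : set R) (d : R) : 0 < d -> measurable D ->
  D `<=` [set r | 0 < r] -> 0 < fine (mu D) -> laplace_on mu D d < fine (mu D).
Proof.
move=> d_gt0 mD Dgt0 muD_gt0.
have int1 : mu.-integrable D (EFin \o cst 1).
  exact: finite_measure_integrable_cst.
have intk : mu.-integrable D (EFin \o fun r => expR (- (d * r))).
  by apply: integrable_expRNM (ltW d_gt0) _ mD _ => r /Dgt0 /ltW.
rewrite -subr_gt0 -[X in X - _]mul1r -Rintegral_cst// -RintegralB//.
apply: Rintegral_gt0 => //.
- exact: (integrableB mD int1 intk).
- by move=> r /Dgt0 r_gt0; rewrite subr_gt0 expR_lt1 oppr_lt0 mulr_gt0.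
- rewrite lt0e measure_ge0 andbT; apply: contraTneq muD_gt0 => ->.
  by rewrite ltxx.
Qed.

Lemma laplace_on_setT_pos {R : realType} (mu : {finite_measure set R -> \bar R})
    (d : R) : mu [set r | r <= 0] = 0%E ->
  laplace_on mu setT d = laplace_on mu [set r | 0 < r] d.
Proof.
move=> mu_le0; rewrite /laplace_on /Rintegral; congr fine.
have mle0 : measurable [set r : R | r <= 0] by rewrite -set_itvNyc.
rewrite (ge0_negligible_integral mle0 measurableT) //.
  congr integral; rewrite setTD.
  by apply/seteqP; split=> r /=; rewrite ltNge => /negP.
by apply/measurable_EFinP; exact: measurable_expRNM.
Qed.

Section size_classes.
Context {R : realType} (rs : R).
Hypothesis rs_ge0 : 0 <= rs.

Lemma measurable_C1 : measurable (C1 rs).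
Proof. by rewrite /C1 -set_itvoc; exact: measurable_itv. Qed.

Lemma measurable_C2 : measurable (C2 rs).
Proof. by rewrite /C2 -set_itvoy; exact: measurable_itv. Qed.

Lemma disjoint_C1_C2 : [disjoint C1 rs & C2 rs].
Proof.
apply/disj_setPS => r [/andP[_ r_le_rs] rs_lt_r].
by move: (le_lt_trans r_le_rs rs_lt_r); rewrite ltxx.
Qed.

Lemma C1_C2_partition : C1 rs `|` C2 rs = [set r | 0 < r].
Proof.
apply/seteqP; split=> r /=.
- by case=> [/andP[]//|]; exact: le_lt_trans.
- by move=> r_gt0; rewrite /C1 /C2 /= r_gt0 /=; case: leP; [left|right].
Qed.

End size_classes.

Section class_laplace_transforms.
Context {R : realType} (q : probability R R) (rs d : R).
Hypotheses (q_le0 : q [set r | r <= 0] = 0%E) (rs_ge0 : 0 <= rs) (d_ge0 : 0 <= d).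

Let C1_ge0 : C1 rs `<=` [set r | 0 <= r].
Proof. by move=> r /andP[/ltW]. Qed.

Let C2_ge0 : C2 rs `<=` [set r | 0 <= r].
Proof. by move=> r /= /(le_lt_trans rs_ge0)/ltW. Qed.

Lemma pcl_C1_add_C2 : pcl q (C1 rs) + pcl q (C2 rs) = 1.
Proof.
have mle0 : measurable [set r : R | r <= 0] by rewrite -set_itvNyc.
have mpos : measurable [set r : R | 0 < r] by rewrite -set_itvoy.
have q_pos : q [set r | 0 < r] = 1%E.
  rewrite -(measureU0 mpos mle0 q_le0) -[RHS](probability_setT q); congr (q _).
  by apply/seteqP; split=> r //= _; rewrite ltNge; case: (r <= 0); [right|left].
have [mC1 mC2] := (measurable_C1 rs, measurable_C2 rs).
rewrite /pcl -fineD ?fin_num_measure// -(measureU q mC1 mC2 (eqP (disjoint_C1_C2 rs))).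
by rewrite C1_C2_partition//; exact: (congr1 fine q_pos).
Qed.

Lemma qhat_mixture : pcl q (C1 rs) != 0 -> pcl q (C2 rs) != 0 ->
  qhat q d = pcl q (C1 rs) * qhat_cl q (C1 rs) d
             + pcl q (C2 rs) * qhat_cl q (C2 rs) d.
Proof.
move=> p1_neq0 p2_neq0.
rewrite /qhat laplace_on_setT_pos// -(C1_C2_partition _ rs_ge0) laplace_on_setU//.
- by rewrite /qhat_cl ![pcl q _ * _]mulrC !divfK.
- exact: measurable_C1.
- exact: measurable_C2.
- by move=> r [/C1_ge0|/C2_ge0].
- exact: disjoint_C1_C2.
Qed.

Lemma qhat_cl_C2_le :
  0 < pcl q (C2 rs) -> qhat_cl q (C2 rs) d <= expR (- (d * rs)).
Proof.
move=> p2_gt0; rewrite /qhat_cl ler_pdivrMr//.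
apply: laplace_on_le => //; first exact: measurable_C2.
by move=> r /ltW rs_le_r; rewrite ler_expR lerN2 ler_wpM2l.
Qed.

Lemma qhat_cl_C1_ge :
  0 < pcl q (C1 rs) -> expR (- (d * rs)) <= qhat_cl q (C1 rs) d.
Proof.
move=> p1_gt0; rewrite /qhat_cl ler_pdivlMr//.
apply: laplace_on_ge => //; first exact: measurable_C1.
by move=> r /andP[_ r_le_rs]; rewrite ler_expR lerN2 ler_wpM2l.
Qed.

End class_laplace_transforms.

Lemma qhat_cl_C1_lt1 {R : realType} (q : probability R R) (rs d : R) :
  0 < d -> 0 < pcl q (C1 rs) -> qhat_cl q (C1 rs) d < 1.
Proof.
move=> d_gt0 p1_gt0; rewrite /qhat_cl ltr_pdivrMr// mul1r.
apply: laplace_on_lt_measure => //; first exact: measurable_C1.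
by move=> r /andP[].
Qed.

Theorem corollary2p9 (R : realType) (q : probability R R) (rs d : R)
  (hq0 : q [set x | x <= 0] = 0%E)
  (hqac : ac_plus_atoms q)
  (hmean : q.-integrable setT (fun x => x%:E))
  (hrs : 0 < rs)
  (hp1 : 0 < pcl q (C1 rs)) (hp2 : 0 < pcl q (C2 rs))
  (hd : 0 < d) :
  let p1 := pcl q (C1 rs) in
  let p2 := pcl q (C2 rs) in
  let pi1 := p1 * (1 - qhat_cl q (C1 rs) d) / (1 - qhat q d) in
  let pi2 := p2 * (1 - qhat_cl q (C2 rs) d) / (1 - qhat q d) in
  let mu_in := d / (1 - qhat q d) in
  let mu_in1 := d / (1 - qhat_cl q (C1 rs) d) in
  let mu_in2 := d / (1 - qhat_cl q (C2 rs) d) in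
  [/\ pi1 <= p1, p2 <= pi2 & mu_in2 <= mu_in <= mu_in1].
Proof.
have [rs_ge0 d_ge0] := (ltW hrs, ltW hd).
rewrite (qhat_mixture q rs d hq0 rs_ge0 d_ge0 (lt0r_neq0 hp1) (lt0r_neq0 hp2)).
apply: mixture_ratio_bounds => //.
- exact: pcl_C1_add_C2.
- exact: le_trans (qhat_cl_C2_le _ _ _ rs_ge0 d_ge0 hp2) (qhat_cl_C1_ge _ _ _ d_ge0 hp1).
- exact: qhat_cl_C1_lt1.
Qed.
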